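(* Let $\mathcal H$ be a well-structured preconditioner set, $\epsilon>0$, $\beta\in(0,1]$, $\eta>0$, $T\in\mathbb N$, and $f:\mathbb R^d\to\mathbb R$ twice continuously differentiable with $\Lambda_{\mathcal H}(f)<\infty$. Let $f_0,\dots,f_{T-1}$ be random differentiable functions and $\Sigma\in\mathcal S_+^d$ such that for all $t,x$, almost surely $-\Sigma\preceq\nabla f(x)\nabla f(x)^\top-\nabla f_t(x)\nabla f_t(x)^\top\preceq\Sigma$. For any fixed $x_0$, let $g_t,V_t$ be generated by the weighted adaptive algorithm. Then with probability $1$, $$\sum_{t=0}^{T-1}\|g_t\|_2^2\le2\big(\|\Sigma\|_{\mathrm{op}}+\|\nabla f(x_0)\|_2^2+\Lambda_{\mathcal H}(f)^2d\eta^2\big)T^3,$$ $$\|V_{T-1}\|_{\mathrm{op}}\le\sqrt{2\big(\|\Sigma\|_{\mathrm{op}}+\|\nabla f(x_0)\|_2^2+\Lambda_{\mathcal H}(f)^2d\eta^2\big)T^3+\epsilon d}.$$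
   Context: $\mathcal S^d_+$ (resp. $\mathcal S^d_{++}$) denotes the set of real symmetric positive semidefinite (resp. positive definite) $d\times d$ matrices; $\langle A,B\rangle=\operatorname{Tr}(A^\top B)$. A set $\mathcal H\subseteq\mathcal S_+^d$ is a well-structured preconditioner set if $\mathcal H=\mathcal S_+^d\cap\mathcal K$ for some set $\mathcal K$ of real $d\times d$ matrices that is closed under scalar multiplication, matrix addition and matrix multiplication and contains the identity $I_d$. For $M\in\mathcal S^d_{++}$, $P_{\mathcal H}(M):=\arg\min_{H\in\mathcal H\cap\mathcal S^d_{++}}\langle M,H^{-1}\rangle+\operatorname{Tr}(H)$ (the minimizer exists and is unique). The adaptive smoothness is $\Lambda_{\mathcal H}(f):=\inf\{\operatorname{Tr}(H): H\in\mathcal H,\ -H\preceq\nabla^2 f(x)\preceq H\ \text{for all }x\}$. Weighted adaptive algorithm: given $x_0\in\mathbb R^d$, set $M_{-1}=0$ and for $t=0,\dots,T-1$: $g_t=\nabla f_t(x_t)$, $M_t=\beta M_{t-1}+g_tg_t^\top$, $V_t=P_{\mathcal H}(M_t+\epsilon I_d)$, $x_{t+1}=x_t-\eta V_t^{-1}g_t$. $\|\cdot\|_{\mathrm{op}}$ is the spectral norm. *)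

From HB Require Import structures.
From mathcomp Require Import all_boot all_order all_algebra.
From mathcomp Require Import all_classical all_reals all_analysis.
Set Implicit Arguments. Unset Strict Implicit. Unset Printing Implicit Defensive.
Import Order.TTheory GRing.Theory Num.Theory.
Import numFieldNormedType.Exports.
Local Open Scope classical_set_scope.
Local Open Scope ring_scope.

Section Defs.
Variables (R : realType) (d : nat).

Definition ei (i : 'I_d) : 'cV[R]_d := delta_mx i 0.

Definition norm2sq (v : 'cV[R]_d) : R := \sum_i (v i 0) ^+ 2.

Definition grad (f : 'cV[R]_d -> R) (x : 'cV[R]_d) : 'cV[R]_d :=
  \col_i derive f x (ei i).

Definition hess (f : 'cV[R]_d -> R) (x : 'cV[R]_d) : 'M[R]_d :=
  \matrix_(i, j) derive (fun y => derive f y (ei i)) x (ei j).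

Definition C2 (f : 'cV[R]_d -> R) : Prop :=
  (forall x, differentiable f x) /\
  (forall i x, differentiable (fun y => derive f y (ei i)) x) /\
  (forall x, {for x, continuous (hess f)}).

Definition psd (A : 'M[R]_d) : Prop :=
  A^T = A /\ forall v : 'cV[R]_d, 0 <= (v^T *m A *m v) 0 0.

Definition pd (A : 'M[R]_d) : Prop :=
  A^T = A /\ forall v : 'cV[R]_d, v != 0 -> 0 < (v^T *m A *m v) 0 0.

Definition loewner (A B : 'M[R]_d) : Prop := psd (B - A).

Definition opnorm (A : 'M[R]_d) : R :=
  sup [set Num.sqrt (norm2sq (A *m v)) | v in [set v | norm2sq v = 1]].

Definition well_structured_K (K : set 'M[R]_d) : Prop :=
  (forall (a : R) A, K A -> K (a *: A)) /\
  (forall A B, K A -> K B -> K (A + B)) /\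
  (forall A B, K A -> K B -> K (A *m B)) /\
  K 1%:M.

Definition Hset (K : set 'M[R]_d) : set 'M[R]_d := [set H | psd H /\ K H].

Definition precond_obj (M H : 'M[R]_d) : R := \tr (M^T *m invmx H) + \tr H.

Definition is_PH (K : set 'M[R]_d) (M V : 'M[R]_d) : Prop :=
  Hset K V /\ pd V /\
  forall H, Hset K H -> pd H -> precond_obj M V <= precond_obj M H.

Definition LamSet (K : set 'M[R]_d) (f : 'cV[R]_d -> R) : set R :=
  [set \tr H | H in [set H | Hset K H /\
      forall x, loewner (- H) (hess f x) /\ loewner (hess f x) H]].

(* Λ_H(f) (meaningful when LamSet is nonempty, i.e. Λ_H(f) < ∞) *)
Definition Lambda (K : set 'M[R]_d) (f : 'cV[R]_d -> R) : R := inf (LamSet K f).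

Definition weighted_adaptive (K : set 'M[R]_d) (eps beta eta : R) (T : nat)
  (ft : nat -> 'cV[R]_d -> R) (x0 : 'cV[R]_d)
  (x g : nat -> 'cV[R]_d) (M V : nat -> 'M[R]_d) : Prop :=
  x 0%N = x0 /\
  forall t : nat, (t < T)%N ->
    [/\ g t = grad (ft t) (x t),
        M t = (if t is t'.+1 then beta *: M t' else 0) + g t *m (g t)^T,
        is_PH K (M t + eps%:M) (V t) &
        x t.+1 = x t - eta *: (invmx (V t) *m g t)].

End Defs.

(* The preconditioner set is closed under the ring operations, so [V = P_H(A)] may
   be compared with the feasible perturbations [V + s I] and [V - s V^2 + s^2 V^3];
   letting [s -> 0+] gives the first-order conditions [tr (A V^-2) <= d] and
   [tr V^2 <= tr A] for [A = M_t + eps I].  The first bounds every step,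
   [|V_t^-1 g_t|^2 <= d], hence [|x_t - x_0|^2 <= t^2 eta^2 d]; since
   [-H <= Hess f <= H] makes [grad f] Lipschitz with constant [tr H], this gives
   [|grad f(x_t)|^2 <= 2 |grad f(x_0)|^2 + 2 Lambda^2 t^2 eta^2 d], and the noise
   assumption tested on [g_t] gives [|g_t|^2 <= |Sigma| + |grad f(x_t)|^2].  Summing
   over [t < T] yields the first bound; the second follows from
   [|V|_op^2 <= tr V^2 <= tr M_(T-1) + eps d], where [tr M_(T-1) <= sum |g_t|^2]
   because [beta <= 1]. *)

From HB Require Import structures.
From mathcomp Require Import all_boot all_order all_algebra.
From mathcomp Require Import all_classical all_reals all_analysis.
From mathcomp Require Import ring lra.
Import Order.TTheory GRing.Theory Num.Theory.
Import numFieldNormedType.Exports.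
Local Open Scope classical_set_scope.
Local Open Scope ring_scope.
Set Implicit Arguments. Unset Strict Implicit. Unset Printing Implicit Defensive.

Section QuadraticForms.
Variables (R : realType) (d : nat).
Implicit Types (u v w : 'cV[R]_d) (A B C H Z : 'M[R]_d).

Definition qform u A v : R := (u^T *m A *m v) 0 0.

Definition dot u v : R := (u^T *m v) 0 0.

Lemma qform_tr u A v : qform u A^T v = qform v A u.
Proof. by rewrite /qform -[v^T *m A *m u]trmxK [RHS]mxE !trmx_mul !trmxK mulmxA. Qed.

Lemma qformMl u A B v : qform u (A *m B) v = qform (A^T *m u) B v.
Proof. by rewrite /qform trmx_mul trmxK !mulmxA. Qed.

Lemma qformMr u A B v : qform u (A *m B) v = qform u A (B *m v).
Proof. by rewrite /qform !mulmxA. Qed.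

Lemma qform_congr u A B C v : qform u (A *m B *m C) v = qform (A^T *m u) B (C *m v).
Proof. by rewrite qformMr qformMl. Qed.

Lemma qformDm u A B v : qform u (A + B) v = qform u A v + qform u B v.
Proof. by rewrite /qform mulmxDr mulmxDl mxE. Qed.

Lemma qformNm u A v : qform u (- A) v = - qform u A v.
Proof. by rewrite /qform mulmxN mulNmx mxE. Qed.

Lemma qformZm u a A v : qform u (a *: A) v = a * qform u A v.
Proof. by rewrite /qform -scalemxAr -scalemxAl mxE. Qed.

Lemma qformDl u1 u2 A v : qform (u1 + u2) A v = qform u1 A v + qform u2 A v.
Proof. by rewrite /qform linearD /= !mulmxDl mxE. Qed.

Lemma qformDr u A v1 v2 : qform u A (v1 + v2) = qform u A v1 + qform u A v2.
Proof. by rewrite /qform mulmxDr mxE. Qed.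

Lemma qformZl a u A v : qform (a *: u) A v = a * qform u A v.
Proof. by rewrite /qform linearZ /= -!scalemxAl mxE. Qed.

Lemma qformZr a u A v : qform u A (a *: v) = a * qform u A v.
Proof. by rewrite /qform -scalemxAr mxE. Qed.

Lemma qformNl u A v : qform (- u) A v = - qform u A v.
Proof. by rewrite -scaleN1r qformZl mulN1r. Qed.

Lemma qformNr u A v : qform u A (- v) = - qform u A v.
Proof. by rewrite -scaleN1r qformZr mulN1r. Qed.

Definition qform_linE :=
  (qformDl, qformDr, qformNl, qformNr, qformZl, qformZr, qformDm, qformNm, qformZm).

Lemma qform_delta i A j : qform (ei R i) A (ei R j) = A i j.
Proof. by rewrite /qform /ei trmx_delta -rowE -colE !mxE. Qed.

Lemma qform_sum u A v : qform u A v = \sum_i \sum_j u i 0 * A i j * v j 0.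
Proof.
rewrite /qform mxE; under eq_bigr do rewrite mxE big_distrl /=.
rewrite exchange_big /=; apply: eq_bigr => i _; apply: eq_bigr => j _.
by rewrite !mxE.
Qed.

Lemma norm2sqE v : norm2sq v = qform v 1%:M v.
Proof.
rewrite qform_sum /norm2sq; apply: eq_bigr => i _.
rewrite (bigD1 i) //= big1 ?addr0; first by rewrite mxE eqxx mulr1 expr2.
by move=> j /negPf ji; rewrite mxE eq_sym ji mulr0 mul0r.
Qed.

Lemma norm2sq_ge0 v : 0 <= norm2sq v.
Proof. by apply: sumr_ge0 => i _; rewrite sqr_ge0. Qed.

Lemma norm2sq0 : norm2sq (0 : 'cV[R]_d) = 0.
Proof. by rewrite /norm2sq big1 // => i _; rewrite mxE expr0n. Qed.

Lemma norm2sq_eq0 v : (norm2sq v == 0) = (v == 0).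
Proof.
apply/idP/eqP => [/eqP v0|->]; last by rewrite norm2sq0.
apply/matrixP => i j; rewrite mxE (ord1 j); apply/eqP; rewrite -sqrf_eq0 eq_le sqr_ge0 andbT.
rewrite -v0 /norm2sq (bigD1 i) //= lerDl; apply: sumr_ge0 => k _; exact: sqr_ge0.
Qed.

Lemma norm2sqZ a v : norm2sq (a *: v) = a ^+ 2 * norm2sq v.
Proof. by rewrite !norm2sqE qformZl qformZr mulrA -expr2. Qed.

Lemma norm2sqN v : norm2sq (- v) = norm2sq v.
Proof. by rewrite -scaleN1r norm2sqZ sqrrN expr1n mul1r. Qed.

Lemma qform_trmx_mul u A : qform u (A^T *m A) u = norm2sq (A *m u).
Proof. by rewrite norm2sqE qformMr qform_tr -[X in qform _ X u]mul1mx qformMr. Qed.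

Lemma mxtrace_qform Z : \tr Z = \sum_i qform (ei R i) Z (ei R i).
Proof. by apply: eq_bigr => i _; rewrite qform_delta. Qed.

Lemma mxtrace_outer_mul v Z : \tr (v *m v^T *m Z) = qform v Z v.
Proof. by rewrite -mulmxA mxtrace_mulC /mxtrace big_ord1. Qed.

Lemma dotC u v : dot u v = dot v u.
Proof. by rewrite /dot -[u^T *m v]trmxK [LHS]mxE trmx_mul trmxK. Qed.

Lemma qform_outer u a b v : qform u (a *m b^T) v = dot u a * dot b v.
Proof. by rewrite /qform /dot mulmxA -(mulmxA _ b^T) mxE big_ord1. Qed.

Lemma norm2sq_dot v : norm2sq v = dot v v.
Proof. by rewrite norm2sqE /qform mulmx1. Qed.

Lemma mxtrace_outer v : \tr (v *m v^T) = norm2sq v.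
Proof. by rewrite mxtrace_mulC /mxtrace big_ord1 norm2sq_dot. Qed.

Lemma psd_qform_ge0 A v : psd A -> 0 <= qform v A v.
Proof. by case=> _ /(_ v). Qed.

Lemma psd_sym A i j : psd A -> A i j = A j i.
Proof. by case=> hs _; rewrite -[in LHS]hs mxE. Qed.

Lemma psd_outer v : psd (v *m v^T).
Proof.
split; first by rewrite trmx_mul trmxK.
by move=> u; rewrite -/(qform u _ u) qform_outer dotC -expr2 sqr_ge0.
Qed.

Lemma psd_mxtrace_ge0 H : psd H -> 0 <= \tr H.
Proof. by move=> hH; rewrite mxtrace_qform; apply: sumr_ge0 => i _; apply: psd_qform_ge0. Qed.

Lemma psd_qform_le_mxtrace H u : psd H -> qform u H u <= \tr H * norm2sq u.
Proof.
move=> hH.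
(* each off-diagonal term is controlled by the 2x2 minor on [i, j] *)
have minor i j : 2 * (u i 0 * H i j * u j 0) <= u j 0 ^+ 2 * H i i + u i 0 ^+ 2 * H j j.
  have := psd_qform_ge0 (u j 0 *: ei R i - u i 0 *: ei R j) hH.
  rewrite !(qform_linE, qform_delta) (psd_sym j i hH) => h; nra.
have -> : \tr H * norm2sq u =
    (\sum_i \sum_j (u j 0 ^+ 2 * H i i + u i 0 ^+ 2 * H j j)) / 2.
  under eq_bigr do rewrite big_split /= -mulr_suml -mulr_sumr.
  by rewrite big_split /= -mulr_suml -mulr_sumr -/(norm2sq u) -/(\tr H); field.
rewrite qform_sum ler_pdivlMr // mulr_suml; apply: ler_sum => i _.
rewrite mulr_suml; apply: ler_sum => j _; rewrite mulrC; exact: minor.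
Qed.

Lemma dot_sqr_le u v : dot u v ^+ 2 <= norm2sq u * norm2sq v.
Proof.
have := psd_qform_le_mxtrace u (psd_outer v).
by rewrite qform_outer mxtrace_outer (dotC v u) -expr2 mulrC.
Qed.

Lemma pd_psd A : pd A -> psd A.
Proof.
case=> hs hA; split => // v; case: (eqVneq v 0) => [->|/hA /ltW //].
by rewrite mulmx0 mxE.
Qed.

Lemma pd_unitmx A : pd A -> A \in unitmx.
Proof.
move=> [_ hA]; rewrite unitmxE unitfE; apply/negP => /det0P [v v0 vA].
have := hA v^T; rewrite trmx_eq0 => /(_ v0).
by rewrite trmxK vA mul0mx mxE ltxx.
Qed.

Lemma pd_add_scalar A s : pd A -> 0 <= s -> pd (A + s%:M).
Proof.
move=> [As hA] s0; split; first by rewrite linearD /= As tr_scalar_mx.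
move=> u u0; rewrite -/(qform u _ u) qformDm -scalemx1 qformZm -norm2sqE.
have := hA u u0; have := mulr_ge0 s0 (norm2sq_ge0 u); rewrite /qform; lra.
Qed.

End QuadraticForms.

Section DualCone.
Variables (R : realType) (d : nat).
Implicit Types (u v : 'cV[R]_d) (A B C N P Z : 'M[R]_d).

Definition psd_form Z := forall u, 0 <= qform u Z u.

Definition dual_psd A := forall Z, psd_form Z -> 0 <= \tr (A *m Z).

Lemma dual_psd0 : dual_psd 0.
Proof. by move=> Z _; rewrite mul0mx mxtrace0. Qed.

Lemma dual_psdD A B : dual_psd A -> dual_psd B -> dual_psd (A + B).
Proof. by move=> hA hB Z hZ; rewrite mulmxDl mxtraceD addr_ge0 ?hA ?hB. Qed.

Lemma dual_psdZ a A : 0 <= a -> dual_psd A -> dual_psd (a *: A).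
Proof. by move=> ha hA Z hZ; rewrite -scalemxAl mxtraceZ mulr_ge0 ?hA. Qed.

Lemma dual_psd_outer v : dual_psd (v *m v^T).
Proof. by move=> Z hZ; rewrite mxtrace_outer_mul. Qed.

Lemma dual_psd_scalar a : 0 <= a -> dual_psd a%:M.
Proof.
move=> a0 Z hZ; rewrite mul_scalar_mx mxtraceZ mxtrace_qform.
by rewrite mulr_ge0 // sumr_ge0.
Qed.

Lemma dual_psd_tr A : dual_psd A -> dual_psd A^T.
Proof.
move=> hA Z hZ; rewrite -mxtrace_tr trmx_mul trmxK mxtrace_mulC.
by apply: hA => u; rewrite qform_tr.
Qed.

Lemma psd_form_trmx_mul A : psd_form (A^T *m A).
Proof. by move=> u; rewrite qform_trmx_mul norm2sq_ge0. Qed.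

Lemma psd_form_congr C P : psd_form P -> psd_form (C^T *m P *m C).
Proof. by move=> hP u; rewrite qform_congr trmxK. Qed.

Lemma psd_form_inv N P : N *m P = 1%:M -> psd_form N -> psd_form P.
Proof.
move=> NP hN w; have -> : qform w P w = qform (N *m (P *m w)) P w.
  by rewrite mulmxA NP mul1mx.
by rewrite -{1}[N]trmxK -qformMl qformMr qform_tr.
Qed.

Lemma qform_le_mxtrace_add_outer N Z v : dual_psd N -> psd_form Z ->
  qform v Z v <= \tr ((N + v *m v^T)^T *m Z).
Proof.
move=> hN hZ; rewrite linearD /= mulmxDl mxtraceD trmx_mul trmxK mxtrace_outer_mul.
by rewrite lerDr (dual_psd_tr hN).
Qed.

End DualCone.

Lemma ge0_of_perturbation (R : realFieldType) (a c : R) :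
  (forall s, 0 < s -> 0 <= s * a + s ^+ 2 * c) -> 0 <= a.
Proof.
move=> h; rewrite leNgt; apply/negP => a0.
have c1 : 0 < `|c| + 1 by rewrite ltr_wpDl.
set s := - a / (`|c| + 1).
have s0 : 0 < s by rewrite divr_gt0 // oppr_gt0.
have es : s * `|c| + s = - a by rewrite /s -[X in _ + X]mulr1 -mulrDr divfK ?gt_eqF.
have hc : s * (s * c) <= s * (s * `|c|) by rewrite !ler_pM2l // ler_norm.
have := h s s0; clearbody s; nra.
Qed.

Lemma invmx_comm (R : comUnitRingType) n (X Y : 'M[R]_n) :
  X \in unitmx -> X *m Y = Y *m X -> invmx X *m Y = Y *m invmx X.
Proof.
move=> uX XY; rewrite -[invmx X *m Y]mulmx1 -(mulmxV uX) !mulmxA -(mulmxA _ Y) -XY.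
by rewrite mulmxA mulVmx // mul1mx.
Qed.

Definition quadpoly_mx (R : ringType) n (V : 'M[R]_n) (s : R) :=
  1%:M + (- s) *: V + s ^+ 2 *: (V *m V).

Lemma quadpoly_mxC (R : comRingType) n (V : 'M[R]_n) s :
  quadpoly_mx V s *m V = V *m quadpoly_mx V s.
Proof. by rewrite !mulmxDl !mulmxDr mul1mx mulmx1 -!scalemxAl -!scalemxAr !mulmxA. Qed.

Lemma quadpoly_mx_mulE (R : comRingType) n (V : 'M[R]_n) s :
  quadpoly_mx V s *m V = V + (- s) *: (V *m V) + s ^+ 2 *: (V *m (V *m V)).
Proof. by rewrite !mulmxDl mul1mx -!scalemxAl !mulmxA. Qed.

Section QuadraticPolynomialOfSymmetric.
Variables (R : realType) (d : nat) (V : 'M[R]_d).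
Hypothesis Vsym : V^T = V.

Let qform_sub_mulmx (a : R) Y u :
  qform (u - a *: (V *m u)) Y (u - a *: (V *m u)) =
    qform u Y u - a * (qform u (Y *m V) u + qform u (V *m Y) u)
    + a ^+ 2 * qform u (V *m Y *m V) u.
Proof.
rewrite !qform_linE.
have -> : qform (V *m u) Y u = qform u (V *m Y) u by rewrite qformMl Vsym.
have -> : qform u Y (V *m u) = qform u (Y *m V) u by rewrite qformMr.
have -> : qform (V *m u) Y (V *m u) = qform u (V *m Y *m V) u by rewrite qform_congr Vsym.
ring.
Qed.

(* completing the square: [1 - s V + s^2 V^2 = (1 - s V / 2)^2 + 3 s^2 V^2 / 4] *)
Lemma psd_form_quadpoly_mx s : psd_form (quadpoly_mx V s).
Proof.
move=> u; have h := qform_sub_mulmx (s / 2) 1%:M u; rewrite !mul1mx !mulmx1 in h.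
have -> : qform u (quadpoly_mx V s) u =
    norm2sq (u - (s / 2) *: (V *m u)) + 3 / 4 * s ^+ 2 * qform u (V *m V) u.
  by rewrite norm2sqE h /quadpoly_mx !qformDm !qformZm; field.
apply: addr_ge0; first exact: norm2sq_ge0.
apply: mulr_ge0; first by rewrite mulr_ge0 ?sqr_ge0.
by have := psd_form_trmx_mul V u; rewrite Vsym.
Qed.

Lemma pd_quadpoly_mx_mul s : pd V -> 0 < s -> pd (quadpoly_mx V s *m V).
Proof.
move=> pdV s0; split.
  have Jsym : (quadpoly_mx V s)^T = quadpoly_mx V s.
    by rewrite /quadpoly_mx !linearD !linearZ /= trmx1 trmx_mul Vsym.
  by rewrite trmx_mul Vsym Jsym quadpoly_mxC.
move=> u u0; change (0 < qform u (quadpoly_mx V s *m V) u).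
have -> : qform u (quadpoly_mx V s *m V) u =
    qform (u - (s / 2) *: (V *m u)) V (u - (s / 2) *: (V *m u))
    + 3 / 4 * s ^+ 2 * qform (V *m u) V (V *m u).
  have -> : qform (V *m u) V (V *m u) = qform u (V *m V *m V) u.
    by rewrite qform_congr Vsym.
  by rewrite quadpoly_mx_mulE qform_sub_mulmx !qformDm !qformZm !mulmxA; field.
have q1 : 0 <= qform (V *m u) V (V *m u) by apply: psd_qform_ge0 (pd_psd pdV).
have s2 : 0 < 3 / 4 * s ^+ 2 by rewrite mulr_gt0 // exprn_gt0.
have [w0|w0] := eqVneq (u - (s / 2) *: (V *m u)) 0.
  rewrite w0 /qform mulmx0 mxE add0r mulr_gt0 //; apply: pdV.2.
  by apply: contraNneq u0 => Vu; move: w0; rewrite Vu scaler0 subr0 => ->.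
have := pdV.2 _ w0; have := mulr_ge0 (ltW s2) q1; rewrite /qform; lra.
Qed.

End QuadraticPolynomialOfSymmetric.

Section PreconditionerOptimality.
Variables (R : realType) (d : nat) (K : set 'M[R]_d) (A V : 'M[R]_d).
Hypotheses (hK : well_structured_K K) (hV : is_PH K A V) (hA : dual_psd A^T).

Let B := invmx V.
Let ta Y := \tr (A^T *m Y).

Let taD Y Z : ta (Y + Z) = ta Y + ta Z.
Proof. by rewrite /ta mulmxDr mxtraceD. Qed.

Let taZ a Y : ta (a *: Y) = a * ta Y.
Proof. by rewrite /ta -scalemxAr mxtraceZ. Qed.

Let taB Y Z : ta (Y - Z) = ta Y - ta Z.
Proof. by rewrite taD -scaleN1r taZ mulN1r. Qed.

Let KV : K V := hV.1.2.
Let pdV : pd V := hV.2.1.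
Let Vsym : V^T = V := pdV.1.
Let uV : V \in unitmx := pd_unitmx pdV.
Let VB : V *m B = 1%:M := mulmxV uV.
Let BV : B *m V = 1%:M := mulVmx uV.
Let Bsym : B^T = B. Proof. by rewrite /B trmx_inv Vsym. Qed.

Let obj_le X : K X -> pd X -> ta B + \tr V <= ta (invmx X) + \tr X.
Proof. by move=> KX pdX; exact: hV.2.2 X (conj (pd_psd pdX) KX) pdX. Qed.

Lemma PH_mxtrace_invmx2_le : \tr (A^T *m (invmx V *m invmx V)) <= d%:R.
Proof.
have [KZ [KD [_ K1]]] := hK.
suff : 0 <= d%:R - ta (B *m B) by rewrite subr_ge0.
apply: (@ge0_of_perturbation _ _ (ta (B *m (B *m B)))) => s s0.
set X := V + s%:M.
have KX : K X by rewrite /X -scalemx1; apply: KD KV (KZ _ _ K1).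
have pdX : pd X := pd_add_scalar pdV (ltW s0).
have uX := pd_unitmx pdX.
set Xi := invmx X.
have BXi : Xi = B - s *: (B *m Xi).
  have : B *m X *m Xi = B by rewrite -mulmxA mulmxV // mulmx1.
  rewrite /X mulmxDr BV mul_mx_scalar mulmxDl mul1mx -scalemxAl => e.
  by rewrite -{1}e addrK.
have XiB : Xi = B - s *: (Xi *m B).
  have : Xi *m X *m B = B by rewrite mulVmx // mul1mx.
  rewrite /X mulmxDr mul_mx_scalar mulmxDl -mulmxA VB mulmx1 -scalemxAl => e.
  by rewrite -{1}e addrK.
have e1 : ta Xi = ta B - s * ta (B *m Xi) by rewrite {1}BXi taB taZ.
have e2 : ta (B *m Xi) = ta (B *m B) - s * ta (B *m Xi *m B).
  by rewrite {1}XiB mulmxBr -scalemxAr taB taZ !mulmxA.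
have e3 : ta (B *m Xi *m B) = ta (B *m (B *m B)) - s * ta (B *m (B *m Xi) *m B).
  by rewrite {1}BXi mulmxBr mulmxBl -scalemxAr -scalemxAl taB taZ !mulmxA.
(* [B Xi] is the inverse of [X V = V^2 + s V], whose form is nonnegative *)
have r0 : 0 <= ta (B *m (B *m Xi) *m B).
  apply: hA; rewrite -{1}Bsym; apply: psd_form_congr.
  apply: (@psd_form_inv _ _ (X *m V)).
    by rewrite mulmxA -(mulmxA X) VB mulmx1; exact: mulmxV uX.
  move=> u; rewrite /X mulmxDl mul_scalar_mx qformDm qformZm.
  have := psd_form_trmx_mul V u; rewrite Vsym => h1.
  exact: addr_ge0 h1 (mulr_ge0 (ltW s0) (psd_qform_ge0 u (pd_psd pdV))).
have := obj_le KX pdX; rewrite e1 e2 e3 /X mxtraceD mxtrace_scalar -mulr_natr => h.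
have : 0 <= s ^+ 3 * ta (B *m (B *m Xi) *m B) by rewrite mulr_ge0 // exprn_ge0 // ltW.
nra.
Qed.

Lemma PH_mxtrace_sqr_le : \tr (V *m V) <= \tr A^T.
Proof.
have [KZ [KD [KM K1]]] := hK.
suff : 0 <= \tr A^T - \tr (V *m V) by rewrite subr_ge0.
apply: (@ge0_of_perturbation _ _ (\tr (V *m (V *m V)))) => s s0.
set J := quadpoly_mx V s; set X := J *m V.
have KX : K X by apply: KM _ _ (KD _ _ (KD _ _ K1 (KZ _ _ KV)) (KZ _ _ (KM _ _ KV KV))) KV.
have XE : X = V + (- s) *: (V *m V) + s ^+ 2 *: (V *m (V *m V)) := quadpoly_mx_mulE V s.
have pdX : pd X := pd_quadpoly_mx_mul Vsym pdV s0.
have uX := pd_unitmx pdX.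
set Xi := invmx X.
have XiV : Xi *m V = V *m Xi.
  by apply: invmx_comm uX _; rewrite /X mulmxA -quadpoly_mxC.
have P : Xi *m V + (- s) *: (Xi *m (V *m V)) + s ^+ 2 *: (Xi *m (V *m (V *m V))) = 1%:M.
  by rewrite -(mulVmx uX) -/Xi XE !mulmxDr -!scalemxAr.
have Q : Xi + (- s) *: (Xi *m V) + s ^+ 2 *: (Xi *m (V *m V)) = B.
  have := congr1 (mulmx^~ B) P; rewrite /= !mulmxDl -!scalemxAl mul1mx.
  by rewrite -!mulmxA VB !mulmx1.
have tP := congr1 ta P; rewrite !taD !taZ /ta mulmx1 in tP.
have tQ := congr1 ta Q; rewrite !taD !taZ in tQ.
(* [Xi V] is the inverse of [J] *)
have r0 : 0 <= ta (Xi *m (V *m (V *m V))).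
  have -> : Xi *m (V *m (V *m V)) = V^T *m (Xi *m V) *m V by rewrite Vsym !mulmxA XiV.
  apply: hA; apply: psd_form_congr; apply: (psd_form_inv _ (psd_form_quadpoly_mx Vsym s)).
  by rewrite XiV mulmxA; exact: mulmxV uX.
have trX : \tr X = \tr V - s * \tr (V *m V) + s ^+ 2 * \tr (V *m (V *m V)).
  by rewrite XE !mxtraceD !mxtraceZ mulNr.
have := obj_le KX pdX; rewrite -/Xi trX -tQ => h.
have := congr1 ( *%R s) tP => /= sP.
have : 0 <= s ^+ 3 * ta (Xi *m (V *m (V *m V))) by rewrite mulr_ge0 // exprn_ge0 // ltW.
rewrite /ta in sP h *; nra.
Qed.

End PreconditionerOptimality.

Section GradientLipschitz.
Variables (R : realType) (d : nat).
Implicit Types (u v w x y : 'cV[R]_d) (f p : 'cV[R]_d -> R) (H S : 'M[R]_d).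

Lemma is_derive_along_line p y w (t : R) : differentiable p (y + t *: w) ->
  is_derive t 1 (fun tau : R => p (y + tau *: w)) (derive p (y + t *: w) w).
Proof.
move=> dp.
have E : (fun h : R => h^-1 *: (((fun tau : R => p (y + tau *: w)) \o shift t) (h *: 1)
            - p (y + t *: w)))
       = (fun h : R => h^-1 *: ((p \o shift (y + t *: w)) (h *: w) - p (y + t *: w))).
  apply/funext => h /=; congr (_ *: (p _ - _)).
  by rewrite /shift /= [h%:A]mulr1 scalerDl addrCA.
apply: DeriveDef; last by rewrite /derive E.
by rewrite /derivable E; exact: diff_derivable.
Qed.

Lemma derive_coordE p z w : differentiable p z ->
  derive p z w = \sum_j w j 0 * derive p z (ei R j).
Proof.
have wE : w = \sum_j w j 0 *: ei R j.
  by rewrite {1}(matrix_sum_delta w); apply: eq_bigr => j _; rewrite big_ord1.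
move=> dp; rewrite deriveE // {1}wE linear_sum.
by apply: eq_bigr => j _; rewrite linearZ deriveE.
Qed.

Lemma grad_mean_value f x y u :
  (forall i z, differentiable (fun z => derive f z (ei R i)) z) ->
  exists z, dot u (grad f x - grad f y) = qform u (hess f z) (x - y).
Proof.
move=> dpf; set w := x - y.
pose h (i : 'I_d) := u i 0 \*: (fun tau : R => derive f (y + tau *: w) (ei R i)).
pose dh (tau : R) (i : 'I_d) :=
  u i 0 *: derive (fun z => derive f z (ei R i)) (y + tau *: w) w.
have hd (tau : R) : is_derive tau (1 : R) (\sum_(i < d) h i) (\sum_i dh tau i).
  apply: is_derive_sum => i; apply: is_deriveZ.
  exact: (is_derive_along_line (p := fun z => derive f z (ei R i))).
have [c _ hc] := @MVT R (\sum_(i < d) h i) (fun tau => \sum_i dh tau i) 0 1 ltr01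
  (fun t _ => hd t) (derivable_within_continuous (fun t _ => @ex_derive _ _ _ _ _ _ _ (hd t))).
exists (y + c *: w).
move: hc; rewrite !fct_sumE subr0 mulr1 => hc.
have -> : dot u (grad f x - grad f y) = \sum_i h i 1 - \sum_i h i 0.
  rewrite /dot mxE -sumrB; apply: eq_bigr => j _.
  by rewrite !mxE /h /= scale1r scale0r addr0 /w [y + _]addrC subrK mulrBr.
rewrite hc qform_sum; apply: eq_bigr => i _.
rewrite /dh derive_coordE // /GRing.scale /= mulr_sumr.
by apply: eq_bigr => j _; rewrite !mxE; ring.
Qed.

Lemma loewner_sym H S : loewner (- H) S -> loewner S H -> S^T = S /\ H^T = H.
Proof.
move=> l1 l2; split; apply/matrixP => i j; rewrite mxE;
  have := psd_sym i j l1; have := psd_sym i j l2; rewrite !mxE; lra.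
Qed.

Lemma loewner_qform_le H S u w (b c : R) : loewner (- H) S -> loewner S H ->
  2 * (b * c) * qform u S w <= b ^+ 2 * qform u H u + c ^+ 2 * qform w H w.
Proof.
move=> l1 l2; have [Ssym Hsym] := loewner_sym l1 l2.
have sS : qform w S u = qform u S w by rewrite -qform_tr Ssym.
have sH : qform w H u = qform u H w by rewrite -qform_tr Hsym.
have := psd_qform_ge0 (b *: u - c *: w) l1; have := psd_qform_ge0 (b *: u + c *: w) l2.
rewrite !qform_linE sS sH; nra.
Qed.

Lemma grad_lipschitz f H x y :
  (forall i z, differentiable (fun z => derive f z (ei R i)) z) -> psd H ->
  (forall z, loewner (- H) (hess f z) /\ loewner (hess f z) H) ->
  norm2sq (grad f x - grad f y) <= (\tr H) ^+ 2 * norm2sq (x - y).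
Proof.
move=> dpf pH hH.
set u := grad f x - grad f y; set w := x - y.
have [z hz] := grad_mean_value x y u dpf.
have [l1 l2] := hH z.
have uE : norm2sq u = qform u (hess f z) w by rewrite norm2sq_dot hz.
have hu := psd_qform_le_mxtrace u pH; have hw := psd_qform_le_mxtrace w pH.
set h := \tr H in hu hw *.
have h0 : 0 <= h := psd_mxtrace_ge0 pH.
have := norm2sq_ge0 u; have := norm2sq_ge0 w.
have [h00|hn0] := eqVneq h 0.
  have := loewner_qform_le u w 1 1 l1 l2; rewrite -uE expr1n !mul1r mulr1.
  move: hu hw; rewrite h00 expr0n /= !mul0r; lra.
have hp : 0 < h by rewrite lt_def hn0 h0.
(* AM-GM with weights [1] and [h]: [2 h |u|^2 <= h |u|^2 + h^3 |w|^2] *)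
have := loewner_qform_le u w 1 h l1 l2; rewrite -uE => hb.
have : h ^+ 2 * qform w H w <= h ^+ 2 * (h * norm2sq w) by rewrite ler_wpM2l ?sqr_ge0.
rewrite -(ler_pM2l hp); move: hb hu; rewrite !expr2; nra.
Qed.

Lemma LamSet_ge0 (K : set 'M[R]_d) f l : LamSet K f l -> 0 <= l.
Proof. by case=> H [[pH _] _] <-; exact: psd_mxtrace_ge0. Qed.

Lemma Lambda_ge0 (K : set 'M[R]_d) f : (exists l, LamSet K f l) -> 0 <= Lambda K f.
Proof. by move=> [l hl]; apply: lb_le_inf; [exists l | move=> m /LamSet_ge0]. Qed.

Lemma grad_lipschitz_Lambda (K : set 'M[R]_d) f x y : C2 f -> (exists l, LamSet K f l) ->
  norm2sq (grad f x - grad f y) <= Lambda K f ^+ 2 * norm2sq (x - y).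
Proof.
move=> [_ [dpf _]] hne.
set N := norm2sq _; set W := norm2sq _.
have hl l : LamSet K f l -> N <= l ^+ 2 * W.
  by case=> H [[pH _] hH] <-; exact: grad_lipschitz.
have N0 : 0 <= N := norm2sq_ge0 _.
have W0 : 0 <= W := norm2sq_ge0 _.
have [l0 hl0] := hne.
have [W00|Wn0] := eqVneq W 0.
  by have := hl l0 hl0; rewrite W00 !mulr0.
have sWp : 0 < Num.sqrt W by rewrite sqrtr_gt0 lt_def Wn0 W0.
(* [sqrt (N / W)] is a lower bound of [LamSet K f], hence below its infimum *)
have hi : Num.sqrt N / Num.sqrt W <= Lambda K f.
  apply: lb_le_inf; first by exists l0.
  move=> l hl'; have lge0 := LamSet_ge0 hl'.
  have -> : l = Num.sqrt (l ^+ 2) by rewrite sqrtr_sqr ger0_norm.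
  by rewrite ler_pdivrMr // -sqrtrM ?sqr_ge0 //; exact/ler_wsqrtr/hl.
rewrite ler_pdivrMr // in hi.
rewrite -(sqr_sqrtr N0) -(sqr_sqrtr W0) -exprMn.
by rewrite lerXn2r // ?nnegrE ?sqrtr_ge0 // mulr_ge0 ?sqrtr_ge0 ?(Lambda_ge0 hne).
Qed.

End GradientLipschitz.

Section OperatorNorm.
Variables (R : realType) (d : nat).
Implicit Types (u v : 'cV[R]_d) (A S : 'M[R]_d).

Lemma norm2sq_mulmx_le A v : norm2sq (A *m v) <= \tr (A^T *m A) * norm2sq v.
Proof.
have hp : psd (A^T *m A).
  by split; [rewrite trmx_mul trmxK | exact: psd_form_trmx_mul].
by have := psd_qform_le_mxtrace v hp; rewrite qform_trmx_mul.
Qed.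

Let unit_images A := [set Num.sqrt (norm2sq (A *m v)) | v in [set v | norm2sq v = 1]].

Let unit_images_ub A : has_ubound (unit_images A).
Proof.
exists (Num.sqrt (\tr (A^T *m A))) => _ [v /= v1 <-].
by apply: ler_wsqrtr; have := norm2sq_mulmx_le A v; rewrite v1 mulr1.
Qed.

Lemma opnorm_ge0 A : 0 <= opnorm A.
Proof.
have [[y Sy]|S0] := pselect (exists y, unit_images A y).
  apply: le_trans (ub_le_sup (unit_images_ub A) Sy).
  by case: Sy => v _ <-; exact: sqrtr_ge0.
rewrite /opnorm -/(unit_images A).
have -> : unit_images A = set0 by apply/seteqP; split => // y Sy; apply: S0; exists y.
by rewrite sup0.
Qed.

Lemma sqrt_norm2sq_mulmx_le_opnorm A v : norm2sq v = 1 ->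
  Num.sqrt (norm2sq (A *m v)) <= opnorm A.
Proof. by move=> v1; apply: (ub_le_sup (unit_images_ub A)); exists v. Qed.

Lemma qform_le_opnorm A v : qform v A v <= opnorm A * norm2sq v.
Proof.
have N0 := norm2sq_ge0 v.
have [/eqP|vn0] := eqVneq (norm2sq v) 0.
  rewrite norm2sq_eq0 => /eqP ->.
  by rewrite /qform trmx0 !mul0mx mxE norm2sq0 mulr0.
have sp : 0 < Num.sqrt (norm2sq v) by rewrite sqrtr_gt0 lt_def vn0 N0.
set s := Num.sqrt (norm2sq v) in sp *.
have ss : s ^+ 2 = norm2sq v by rewrite sqr_sqrtr.
set e := s^-1 *: v.
have e1 : norm2sq e = 1 by rewrite norm2sqZ exprVn ss mulVf.
have ve : v = s *: e by rewrite /e scalerA divff ?gt_eqF // scale1r.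
rewrite [in qform _ _ _]ve qformZl qformZr mulrA -expr2 ss mulrC ler_wpM2r //.
have csA := dot_sqr_le e (A *m e); rewrite e1 mul1r in csA.
have : dot e (A *m e) <= Num.sqrt (norm2sq (A *m e)).
  by rewrite (le_trans (ler_norm _)) // -sqrtr_sqr; exact: ler_wsqrtr.
rewrite /dot mulmxA -/(qform e A e) => /le_trans; apply.
exact: sqrt_norm2sq_mulmx_le_opnorm.
Qed.

Lemma opnorm_le_sqrt_mxtrace_sqr S : S^T = S -> opnorm S <= Num.sqrt (\tr (S *m S)).
Proof.
move=> Ssym; rewrite /opnorm -/(unit_images S).
have [[y Sy]|S0] := pselect (exists y, unit_images S y).
  apply: ge_sup; first by exists y.
  move=> _ [v /= v1 <-]; apply: ler_wsqrtr.
  by have := norm2sq_mulmx_le S v; rewrite Ssym v1 mulr1.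
have -> : unit_images S = set0 by apply/seteqP; split => // z Sz; apply: S0; exists z.
by rewrite sup0 sqrtr_ge0.
Qed.

End OperatorNorm.

Section SquaredNorms.
Variables (R : realType) (d : nat).
Implicit Types (a b : 'cV[R]_d) (S : 'M[R]_d).

Lemma norm2sq_add (p q : R) a b :
  p * q * norm2sq (a + b) <= q * (p + q) * norm2sq a + p * (p + q) * norm2sq b.
Proof.
rewrite /norm2sq !mulr_sumr -big_split /=; apply: ler_sum => i _.
rewrite mxE; have := sqr_ge0 (q * a i 0 - p * b i 0); nra.
Qed.

Lemma norm2sq_sum_le n (v : 'I_n -> 'cV[R]_d) :
  norm2sq (\sum_i v i) <= n%:R * \sum_i norm2sq (v i).
Proof.
elim: n v => [|n IH] v; first by rewrite !big_ord0 norm2sq0 mul0r.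
rewrite !big_ord_recr /=.
set a := \sum_(i < n) _; set b := v ord_max; set S := \sum_(i < n) _.
have hS : norm2sq a <= n%:R * S := IH _.
have S0 : 0 <= S by apply: sumr_ge0 => i _; exact: norm2sq_ge0.
have b0 := norm2sq_ge0 b.
have [n0|n0] := posnP n.
  move: hS; rewrite n0 mul0r => a0.
  have -> : a = 0 by apply/eqP; rewrite -norm2sq_eq0 eq_le a0 norm2sq_ge0.
  by rewrite add0r mul1r lerDr.
have np : 0 < n%:R :> R by rewrite ltr0n.
have := norm2sq_add n%:R 1 a b; rewrite mulr1 mul1r => hab.
rewrite -(ler_pM2l np) (le_trans hab) // -natr1.
have := ler_wpM2l (ltW (ltr_pwDl ltr01 (ltW np))) hS; rewrite [1 + _]addrC => h.
nra.
Qed.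

Lemma norm2sq_le_of_loewner_outer S a b :
  loewner (- S) (a *m a^T - b *m b^T) -> norm2sq b <= opnorm S + norm2sq a.
Proof.
move=> /(psd_qform_ge0 b); rewrite !qform_linE !qform_outer opprK -!norm2sq_dot.
have := dot_sqr_le a b; rewrite (dotC b a) expr2.
have := qform_le_opnorm S b; have := opnorm_ge0 S.
have := norm2sq_ge0 a; have := norm2sq_ge0 b; nra.
Qed.

End SquaredNorms.

Section AdaptiveTrajectory.
Variables (R : realType) (d : nat) (K : set 'M[R]_d) (eps beta eta : R) (T : nat).
Variables (ft : nat -> 'cV[R]_d -> R) (x0 : 'cV[R]_d).
Variables (x g : nat -> 'cV[R]_d) (M V : nat -> 'M[R]_d).
Hypotheses (hK : well_structured_K K) (heps : 0 < eps) (hbeta : 0 <= beta) (hbeta1 : beta <= 1).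
Hypothesis hrun : weighted_adaptive K eps beta eta T ft x0 x g M V.

Lemma dual_psd_M t : (t < T)%N -> dual_psd (M t).
Proof.
elim: t => [|t IH] ht; have [_ -> _ _] := hrun.2 _ ht.
  by apply: dual_psdD (dual_psd_outer _); exact: dual_psd0.
by apply: dual_psdD (dual_psd_outer _); exact: dual_psdZ hbeta (IH (ltnW ht)).
Qed.

Lemma dual_psd_precond_arg t : (t < T)%N -> dual_psd (M t + eps%:M)^T.
Proof.
by move=> ht; apply/dual_psd_tr/dual_psdD; [exact: dual_psd_M | exact/dual_psd_scalar/ltW].
Qed.

Lemma norm2sq_step_le t : (t < T)%N -> norm2sq (invmx (V t) *m g t) <= d%:R.
Proof.
move=> ht; have [_ eM hPH _] := hrun.2 _ ht.
apply: le_trans (PH_mxtrace_invmx2_le hK hPH (dual_psd_precond_arg ht)).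
have Bsym : (invmx (V t))^T = invmx (V t) by rewrite trmx_inv hPH.2.1.1.
rewrite -qform_trmx_mul Bsym.
have -> : M t + eps%:M =
    (if t is t'.+1 then beta *: M t' else 0) + eps%:M + g t *m (g t)^T.
  by rewrite eM addrAC.
apply: qform_le_mxtrace_add_outer; last by rewrite -{1}Bsym; exact: psd_form_trmx_mul.
apply: dual_psdD; last exact/dual_psd_scalar/ltW.
by case: t ht {eM hPH Bsym} => [|t] ht; [exact: dual_psd0 | exact/dual_psdZ/dual_psd_M/ltnW].
Qed.

Lemma norm2sq_displacement_le t : (t <= T)%N ->
  norm2sq (x t - x0) <= t%:R ^+ 2 * (eta ^+ 2 * d%:R).
Proof.
move=> ht; rewrite -hrun.1 -(telescope_sumr x (leq0n t)) big_mkord.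
apply: le_trans (norm2sq_sum_le _) _; rewrite expr2 -mulrA ler_wpM2l //.
have step (k : 'I_t) : norm2sq (x k.+1 - x k) <= eta ^+ 2 * d%:R.
  have [_ _ _ ->] := hrun.2 k (leq_trans (ltn_ord k) ht).
  rewrite addrAC subrr add0r norm2sqN norm2sqZ ler_wpM2l ?sqr_ge0 //.
  exact/norm2sq_step_le/(leq_trans (ltn_ord k) ht).
apply: le_trans (ler_sum _ (fun k _ => step k)) _.
by rewrite sumr_const card_ord mulr_natl.
Qed.

Variable f : 'cV[R]_d -> R.
Hypotheses (hf : C2 f) (hLam : exists l, LamSet K f l).

Lemma norm2sq_grad_trajectory_le t : (t <= T)%N ->
  norm2sq (grad f (x t))
    <= 2 * norm2sq (grad f x0) + 2 * (Lambda K f ^+ 2 * (t%:R ^+ 2 * (eta ^+ 2 * d%:R))).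
Proof.
move=> ht; have := norm2sq_add 1 1 (grad f x0) (grad f (x t) - grad f x0).
rewrite addrC subrK !mul1r (_ : 1 + 1 = 2 :> R) //.
have := grad_lipschitz_Lambda (x t) x0 hf hLam.
have : Lambda K f ^+ 2 * norm2sq (x t - x0)
    <= Lambda K f ^+ 2 * (t%:R ^+ 2 * (eta ^+ 2 * d%:R)).
  by rewrite ler_wpM2l ?sqr_ge0 ?norm2sq_displacement_le.
lra.
Qed.

Variable Sigma : 'M[R]_d.
Hypothesis hnoise : forall t y, (t < T)%N ->
  loewner (- Sigma) (grad f y *m (grad f y)^T - grad (ft t) y *m (grad (ft t) y)^T).

Let C := opnorm Sigma + norm2sq (grad f x0) + Lambda K f ^+ 2 * d%:R * eta ^+ 2.

Lemma norm2sq_g_le t : (t < T)%N -> norm2sq (g t) <= 2 * C * T%:R ^+ 2.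
Proof.
move=> ht; have [eg _ _ _] := hrun.2 t ht.
have := norm2sq_le_of_loewner_outer (hnoise (x t) ht); rewrite -eg => hg.
have hgrad := norm2sq_grad_trajectory_le (ltnW ht).
have T1 : 1 <= T%:R ^+ 2 :> R by rewrite expr_ge1 // ler1n (leq_ltn_trans (leq0n t) ht).
have tT : t%:R ^+ 2 <= T%:R ^+ 2 :> R by rewrite lerXn2r ?nnegrE // ler_nat ltnW.
have := ler_peMr (opnorm_ge0 Sigma) T1; have := ler_peMr (norm2sq_ge0 (grad f x0)) T1.
have : Lambda K f ^+ 2 * (t%:R ^+ 2 * (eta ^+ 2 * d%:R))
    <= Lambda K f ^+ 2 * (T%:R ^+ 2 * (eta ^+ 2 * d%:R)).
  by rewrite ler_wpM2l ?sqr_ge0 //; apply: ler_wpM2r => //; rewrite mulr_ge0 ?sqr_ge0 ?ler0n.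
have := opnorm_ge0 Sigma; have := norm2sq_ge0 (grad f x0); rewrite /C; lra.
Qed.

Lemma sum_norm2sq_g_le : \sum_(t < T) norm2sq (g t) <= 2 * C * T%:R ^+ 3.
Proof.
apply: le_trans (ler_sum _ (fun t _ => norm2sq_g_le (ltn_ord t))) _.
have -> : T%:R ^+ 3 = T%:R ^+ 2 * T%:R :> R by rewrite exprSr.
by rewrite sumr_const card_ord -[_ *+ T]mulr_natr mulrA.
Qed.

Lemma mxtrace_M_le t : (t < T)%N -> \tr (M t) <= \sum_(k < t.+1) norm2sq (g k).
Proof.
elim: t => [|t IH] ht; have [_ eM _ _] := hrun.2 _ ht; rewrite eM /= mxtraceD mxtrace_outer.
  by rewrite mxtrace0 add0r big_ord1.
rewrite mxtraceZ big_ord_recr /= lerD2r.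
have trM0 : 0 <= \tr (M t).
  rewrite -[M t]mulmx1; apply: (dual_psd_M (ltnW ht)) => u.
  by rewrite -norm2sqE norm2sq_ge0.
by apply: le_trans (IH (ltnW ht)); rewrite ler_piMl.
Qed.

Lemma opnorm_V_last_le : (0 < T)%N ->
  opnorm (V T.-1) <= Num.sqrt (\sum_(t < T) norm2sq (g t) + eps * d%:R).
Proof.
move=> hT; have hT1 : (T.-1 < T)%N by rewrite prednK.
have [_ _ hPH _] := hrun.2 _ hT1.
apply: le_trans (opnorm_le_sqrt_mxtrace_sqr hPH.2.1.1) _.
have := PH_mxtrace_sqr_le hK hPH (dual_psd_precond_arg hT1).
rewrite mxtrace_tr mxtraceD mxtrace_scalar -[eps *+ d]mulr_natr => hV.
have := mxtrace_M_le hT1; rewrite prednK // => hM.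
by apply: ler_wsqrtr; lra.
Qed.

End AdaptiveTrajectory.

Theorem lemmaC4 (R : realType) (d : nat) (K : set 'M[R]_d)
  (eps beta eta : R) (T : nat) (f : 'cV[R]_d -> R)
  (d0 : measure_display) (Omega : measurableType d0) (P : probability Omega R)
  (ft : nat -> Omega -> 'cV[R]_d -> R) (Sigma : 'M[R]_d) (x0 : 'cV[R]_d)
  (x g : Omega -> nat -> 'cV[R]_d) (M V : Omega -> nat -> 'M[R]_d) :
  well_structured_K K ->
  0 < eps -> 0 < beta -> beta <= 1 -> 0 < eta -> (0 < T)%N ->
  C2 f -> (exists l, LamSet K f l) ->
  (forall t w x, (t < T)%N -> differentiable (ft t w) x) ->
  psd Sigma ->
  {ae P, forall w, forall t x, (t < T)%N ->
      loewner (- Sigma) (grad f x *m (grad f x)^T - grad (ft t w) x *m (grad (ft t w) x)^T) /\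
      loewner (grad f x *m (grad f x)^T - grad (ft t w) x *m (grad (ft t w) x)^T) Sigma} ->
  (forall w, weighted_adaptive K eps beta eta T (ft^~ w) x0 (x w) (g w) (M w) (V w)) ->
  let C := opnorm Sigma + norm2sq (grad f x0) + Lambda K f ^+ 2 * d%:R * eta ^+ 2 in
  {ae P, forall w,
      \sum_(t < T) norm2sq (g w t) <= 2 * C * T%:R ^+ 3 /\
      opnorm (V w T.-1) <= Num.sqrt (2 * C * T%:R ^+ 3 + eps * d%:R)}.
Proof.
move=> hK heps hbeta hbeta1 _ hT hf hLam _ _ hae hrun C.
apply: filterS hae => w hw.
have hsum : \sum_(t < T) norm2sq (g w t) <= 2 * C * T%:R ^+ 3.
  exact: (sum_norm2sq_g_le hK heps (ltW hbeta) (hrun w) hf hLam (fun t y ht => (hw t y ht).1)).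
split => //; apply: le_trans (opnorm_V_last_le hK heps (ltW hbeta) hbeta1 (hrun w) hT) _.
by apply: ler_wsqrtr; rewrite lerD2r.
Qed.
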